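(* Let $(X,d)$ be a compact metric space, $T:X\to X$ continuous, $Z\subset X$ non-empty, and $\Phi=\{\varphi_n:X\to\mathbb{R}\}_{n\in\mathbb{N}}$ a sequence of continuous functions satisfying the tempered distortion condition $\lim_{\varepsilon\to 0}\limsup_{n\to\infty}\varphi_n(\varepsilon)/n=0$, where $\varphi_n(\varepsilon)=\sup\{|\varphi_n(x)-\varphi_n(y)|: x\in X,\ y\in B_n(x,e^{-n\varepsilon})\}$. Then $$P^{\tilde B}_Z(T,\Phi)=\lim_{\varepsilon\to0}\tilde M_\varepsilon(Z,\Phi).$$
   Context: The neutralized Bowen ball is $B_n(x,e^{-n\varepsilon})=\{y\in X: d(T^jx,T^jy)<e^{-n\varepsilon}\ \forall\,0\le j\le n-1\}$. For $\varepsilon>0$, $N\in\mathbb{N}$, $s\in\mathbb{R}$, let $M^s_{N,\varepsilon}(Z,\Phi)=\inf\sum_{i\in I}\exp[-n_is+\sup_{y\in B_{n_i}(x_i,e^{-n_i\varepsilon})}\varphi_{n_i}(y)]$, the infimum over all finite or countable covers $\{B_{n_i}(x_i,e^{-n_i\varepsilon})\}_{i\in I}$ of $Z$ with $n_i\ge N$, $x_i\in X$; $M^s_\varepsilon=\lim_{N\to\infty}M^s_{N,\varepsilon}$; $M_\varepsilon(Z,\Phi)=\inf\{s:M^s_\varepsilon(Z,\Phi)=0\}=\sup\{s:M^s_\varepsilon(Z,\Phi)=\infty\}$; $P^{\tilde B}_Z(T,\Phi)=\lim_{\varepsilon\to0}M_\varepsilon(Z,\Phi)$. The quantities $\tilde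 M^s_{N,\varepsilon}(Z,\Phi)$, $\tilde M^s_\varepsilon(Z,\Phi)$, $\tilde M_\varepsilon(Z,\Phi)$ are defined in exactly the same way except that, in the sum, $\sup_{y\in B_{n_i}(x_i,e^{-n_i\varepsilon})}\varphi_{n_i}(y)$ is replaced by $\varphi_{n_i}(z_i)$ for a point $z_i\in B_{n_i}(x_i,e^{-n_i\varepsilon})$ chosen in each ball of the cover. *)

From HB Require Import structures.
From mathcomp Require Import all_boot all_order all_algebra.
From mathcomp Require Import all_classical all_reals all_analysis.
Set Implicit Arguments. Unset Strict Implicit. Unset Printing Implicit Defensive.
Import Order.TTheory GRing.Theory Num.Theory.
Import numFieldNormedType.Exports.
Local Open Scope classical_set_scope.
Local Open Scope ring_scope.

Section NeutralizedBowen.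
Variables (R : realType) (X : metricType R) (T : X -> X).

Definition bowen_ball (n : nat) (x : X) (r : R) : set X :=
  [set y | forall j : nat, (j < n)%N -> mdist (iter j T x) (iter j T y) < r].

Definition nball (n : nat) (x : X) (eps : R) : set X :=
  bowen_ball n x (expR (- (n%:R * eps))).

Variable phi : nat -> X -> R.

Definition distortion (n : nat) (eps : R) : R :=
  sup [set r | exists x y, nball n x eps y /\ r = `|phi n x - phi n y|].

Definition tempered_distortion : Prop :=
  limn_esup (fun n => ((distortion n eps) / n%:R)%:E)
    @[eps --> 0^'+] --> 0%E.

Definition is_cover (Z : set X) (N : nat) (eps : R)
    (I : set nat) (n : nat -> nat) (x : nat -> X) : Prop :=
  (forall i, I i -> (N <= n i)%N) /\
  Z `<=` \bigcup_(i in I) nball (n i) (x i) eps.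

Definition M_N (Z : set X) (s : R) (N : nat) (eps : R) : \bar R :=
  ereal_inf [set v | exists I n x, is_cover Z N eps I n x /\
     v = \esum_(i in I)
           (expR (- ((n i)%:R * s) + sup (phi (n i) @` nball (n i) (x i) eps)))%:E].

Definition tM_N (Z : set X) (s : R) (N : nat) (eps : R) : \bar R :=
  ereal_inf [set v | exists I n x z, is_cover Z N eps I n x /\
     (forall i, I i -> nball (n i) (x i) eps (z i)) /\
     v = \esum_(i in I) (expR (- ((n i)%:R * s) + phi (n i) (z i)))%:E].

Definition M_s (Z : set X) (s eps : R) : \bar R := lim (M_N Z s N eps @[N --> \oo]).
Definition tM_s (Z : set X) (s eps : R) : \bar R := lim (tM_N Z s N eps @[N --> \oo]).

Definition M_eps (Z : set X) (eps : R) : \bar R :=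
  ereal_inf [set s%:E | s in [set s : R | M_s Z s eps = 0%E]].
Definition tM_eps (Z : set X) (eps : R) : \bar R :=
  ereal_inf [set s%:E | s in [set s : R | tM_s Z s eps = 0%E]].

Definition P_tildeB (Z : set X) : \bar R := lim (M_eps Z eps @[eps --> 0^'+]).

End NeutralizedBowen.

(* Inside one cover, replacing the supremum of phi_n over a neutralized Bowen
   ball by its value at a chosen point changes the term by at most the
   distortion phi_n(eps) <= n eta (for large n, by tempered distortion), i.e. it
   shifts the exponent s by eta; hence tM_eps <= M_eps <= tM_eps + 2 eta.  The
   same estimate, together with the inclusion of eps-balls in eps'-balls for
   eps' <= eps, gives M_eps' <= M_eps + eta: M_eps is almost nonincreasing near
   0, so it converges, and tM_eps is squeezed to the same limit. *)

From HB Require Import structures.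
From mathcomp Require Import all_boot all_order all_algebra.
From mathcomp Require Import all_classical all_reals all_analysis.
From mathcomp Require Import lra.
Import Order.TTheory GRing.Theory Num.Theory.
Import numFieldNormedType.Exports.
Local Open Scope classical_set_scope.
Local Open Scope ring_scope.

Section right0_envelopes.
Context {R : realType}.
Implicit Types (f : R -> \bar R) (a b e : R).
Local Open Scope ereal_scope.

Definition sup_right0 f e := ereal_sup [set f t | t in [set t | (0 < t <= e)%R]].
Definition inf_right0 f e := ereal_inf [set f t | t in [set t | (0 < t <= e)%R]].

Lemma sup_right0_ge f e : (0 < e)%R -> f e <= sup_right0 f e.
Proof. by move=> e0; apply: ereal_sup_ubound; exists e; rewrite //= e0/=. Qed.

Lemma inf_right0_le f e : (0 < e)%R -> inf_right0 f e <= f e.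
Proof. by move=> e0; apply: ereal_inf_lbound; exists e; rewrite //= e0/=. Qed.

Lemma sup_right0_cvg f : sup_right0 f e @[e --> 0^'+] -->
  ereal_inf [set sup_right0 f e | e in `]0%R, +oo[].
Proof.
apply: nondecreasing_at_right_cvge => // a b _ _ ab.
apply: le_ereal_sup => _ [t /andP[t0 ta] <-].
by exists t => //=; rewrite t0 (le_trans ta ab).
Qed.

Lemma inf_right0_cvg f : inf_right0 f e @[e --> 0^'+] -->
  ereal_sup [set inf_right0 f e | e in `]0%R, +oo[].
Proof.
apply: nonincreasing_at_right_cvge => // a b _ _ ab.
apply: le_ereal_inf => _ [t /andP[t0 ta] <-].
by exists t => //=; rewrite t0 (le_trans ta ab).
Qed.

End right0_envelopes.

Lemma near_right0_forall_le {R : realType} {P : R -> Prop} :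
  (\forall e \near 0^'+, P e) ->
  \forall e \near 0^'+, forall t, 0 < t <= e -> P t.
Proof.
case=> d /= d0 dP; exists d => // e /= de e0 t /andP[t0 te].
apply: dP => //=; rewrite sub0r normrN gtr0_norm //.
by move: de; rewrite sub0r normrN gtr0_norm //; exact: le_lt_trans.
Qed.

Local Open Scope ereal_scope.

(* g and f are squeezed between the lower envelope of g and the upper envelope
   of f, whose limits coincide because f is almost nonincreasing. *)
Lemma cvg_at_right0_of_almost_nonincreasing (R : realType) (f g : R -> \bar R) :
  (\forall e \near 0^'+, g e <= f e) ->
  (forall eta : R, (0 < eta)%R -> \forall e \near 0^'+, f e <= g e + eta%:E) ->
  (forall eta : R, (0 < eta)%R ->
     \forall t \near 0^'+, forall e, (t <= e)%R -> f t <= f e + eta%:E) ->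
  g x @[x --> 0^'+] --> lim (f x @[x --> 0^'+]).
Proof.
move=> g_le_f f_le_g f_almost_ni.
have u_cvg := sup_right0_cvg f; have v_cvg := inf_right0_cvg g.
set L := ereal_inf _ in u_cvg; set L' := ereal_sup _ in v_cvg.
have sandwich : \forall e \near 0^'+,
    inf_right0 g e <= g e <= f e /\ f e <= sup_right0 f e.
  near=> e; have e0 : (0 < e)%R by near: e; exact: nbhs_right_gt.
  rewrite inf_right0_le // sup_right0_ge //=; split => //.
  by near: e.
have L'_le_L : L' <= L.
  apply: (lee_cvg_to v_cvg u_cvg); apply: filterS sandwich.
  by move=> e [/andP[ve ge] fe]; rewrite (le_trans ve) // (le_trans ge).
have L_le_L' : L <= L'.
  apply/lee_addgt0Pr => eta eta0; have eta20 : (0 < eta / 2)%R by rewrite divr_gt0.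
  have sup_le_f : \forall t \near 0^'+, sup_right0 f t <= f t + (eta / 2)%:E.
    apply: filterS (near_right0_forall_le (f_almost_ni _ eta20)) => t fs.
    by apply: ge_ereal_sup => _ [s /[dup] /fs fs' /andP[_ st] <-]; exact: fs'.
  have L_le_f : \forall t \near 0^'+, L <= f t + (eta / 2)%:E.
    apply: filterS2 sup_le_f (nbhs_right_gt 0) => t sf t0.
    apply: le_trans sf; apply: ereal_inf_lbound; exists t => //.
    by rewrite /= in_itv /= andbT.
  have L_le_g : \forall t \near 0^'+, L <= g t + eta%:E.
    apply: filterS2 L_le_f (f_le_g _ eta20) => t Lf fg.
    by rewrite (splitr eta) EFinD addeA (le_trans Lf) ?leeD2r.
  near (0 : R)^'+ => e.
  have L_le_v : L <= inf_right0 g e + eta%:E.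
    rewrite -leeBlDr //; apply: le_ereal_inf_tmp => _ [t t_le_e <-].
    by rewrite leeBlDr //; move: t t_le_e; near: e; exact: near_right0_forall_le.
  apply: le_trans L_le_v (leeD2r _ (ereal_sup_ubound _)).
  exists e => //; rewrite /= in_itv /= andbT; near: e; exact: nbhs_right_gt.
have {L_le_L' L'_le_L} L'E : L' = L by apply/eqP; rewrite eq_le L'_le_L L_le_L'.
rewrite L'E in v_cvg.
have f_cvg : f x @[x --> 0^'+] --> L.
  apply: squeeze_cvge v_cvg u_cvg; apply: filterS sandwich.
  by move=> e [/andP[ve ge] ->]; rewrite (le_trans ve ge).
rewrite (cvg_lim _ f_cvg) //; apply: squeeze_cvge v_cvg u_cvg.
by apply: filterS sandwich => e [/andP[-> ge] fe]; rewrite (le_trans ge fe).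
Unshelve. all: by end_near. Qed.

Lemma lee_lim_nondecreasing (R : realType) (u v : (\bar R)^nat) :
  nondecreasing_seq u -> nondecreasing_seq v ->
  (\forall N \near \oo, u N <= v N) -> limn u <= limn v.
Proof.
move=> u_nd v_nd; apply: lee_lim; exact: ereal_nondecreasing_is_cvgn.
Qed.

Lemma ereal_inf_zeros_shift (R : realType) (F G : R -> \bar R) (delta : R) :
  (forall s, 0 <= F s) -> (forall s, F (s + delta)%R <= G s) ->
  ereal_inf [set s%:E | s in [set s | F s = 0]] <=
  ereal_inf [set s%:E | s in [set s | G s = 0]] + delta%:E.
Proof.
move=> F_ge0 F_le_G; rewrite -leeBlDr //.
apply: le_ereal_inf_tmp => _ [s Gs0 <-]; rewrite leeBlDr // -EFinD.
apply: ereal_inf_lbound; exists (s + delta)%R => //=.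
by apply/le_anti; rewrite F_ge0 andbT -Gs0 F_le_G.
Qed.

Local Close Scope ereal_scope.

Section neutralized_bowen_sums.
Context {R : realType} {X : metricType R} (T : X -> X) (phi : nat -> X -> R).
(* Needed because [sup] returns a junk value on sets that are not bounded. *)
Hypothesis phi_bounded : forall n, exists B : R, forall x, `|phi n x| <= B.

Lemma nball_center n x eps : nball T n x eps x.
Proof. by move=> j _; rewrite mdistxx expR_gt0. Qed.

Lemma le_nball n x eps eps' : eps' <= eps ->
  nball T n x eps `<=` nball T n x eps'.
Proof.
move=> eps'_le y y_in j jn; apply: lt_le_trans (y_in j jn) _.
by rewrite ler_expR lerN2 ler_wpM2l.
Qed.

Lemma has_sup_image_phi n (A : set X) : A !=set0 -> has_sup (phi n @` A).
Proof.
case=> a Aa; split; first by exists (phi n a), a.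
have [B phiB] := phi_bounded n; exists B => _ [y _ <-].
exact: le_trans (ler_norm _) (phiB y).
Qed.

Lemma phi_le_sup_nball {n x eps y} : nball T n x eps y ->
  phi n y <= sup (phi n @` nball T n x eps).
Proof.
move=> y_in; apply: sup_upper_bound; last by exists y.
by apply: has_sup_image_phi; exists x; exact: nball_center.
Qed.

Lemma le_distortion {n x eps y} : nball T n x eps y ->
  `|phi n x - phi n y| <= distortion T phi n eps.
Proof.
move=> y_in; apply: sup_upper_bound; last by exists x, y.
split; first by exists `|phi n x - phi n y|, x, y.
have [B phiB] := phi_bounded n; exists (B + B) => _ [a [b [_ ->]]].
by apply: le_trans (ler_normB _ _) _; exact: lerD.
Qed.

Lemma sup_nball_le n x eps :
  sup (phi n @` nball T n x eps) <= phi n x + distortion T phi n eps.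
Proof.
apply: ge_sup; first by exists (phi n x), x => //; exact: nball_center.
move=> _ [y y_in <-]; have := le_distortion y_in.
by rewrite distrC => /(le_trans (ler_norm _)); rewrite lerBlDl.
Qed.

Lemma phi_center_le {n x eps z} : nball T n x eps z ->
  phi n x <= phi n z + distortion T phi n eps.
Proof.
by move=> z_in; have := le_distortion z_in => /(le_trans (ler_norm _)); rewrite lerBlDl.
Qed.

Definition distortion_le_rate eps eta :=
  \forall m \near \oo, distortion T phi m eps <= m%:R * eta.

Variable Z : set X.
Local Open Scope ereal_scope.

Lemma MN_ge0 s N eps : 0 <= M_N T phi Z s N eps.
Proof.
apply: le_ereal_inf_tmp => _ [I [n [x [_ ->]]]].
by apply: esum_ge0 => i _; rewrite lee_fin expR_ge0.
Qed.

Lemma tMN_ge0 s N eps : 0 <= tM_N T phi Z s N eps.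
Proof.
apply: le_ereal_inf_tmp => _ [I [n [x [z [_ [_ ->]]]]]].
by apply: esum_ge0 => i _; rewrite lee_fin expR_ge0.
Qed.

Lemma MN_nondecreasing s eps : nondecreasing_seq (M_N T phi Z s ^~ eps).
Proof.
move=> N N' NN'; apply: ereal_inf_le_tmp => _ [I [n [x [[nN cover] ->]]]].
by exists I, n, x; split => //; split => // i Ii; exact: leq_trans NN' (nN i Ii).
Qed.

Lemma tMN_nondecreasing s eps : nondecreasing_seq (tM_N T phi Z s ^~ eps).
Proof.
move=> N N' NN'; apply: ereal_inf_le_tmp => _ [I [n [x [z [[nN cover] [z_in ->]]]]]].
by exists I, n, x, z; split => //; split => // i Ii; exact: leq_trans NN' (nN i Ii).
Qed.

Lemma tMN_le_MN s N eps : tM_N T phi Z s N eps <= M_N T phi Z s N eps.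
Proof.
apply: le_ereal_inf_tmp => _ [I [n [x [cover ->]]]]; apply: ge_ereal_inf.
exists (\esum_(i in I) (expR (- ((n i)%:R * s) + phi (n i) (x i)))%:E).
  by exists I, n, x, x; split => //; split => // i _; exact: nball_center.
apply: le_esum => i _; rewrite lee_fin ler_expR lerD2l.
exact/phi_le_sup_nball/nball_center.
Qed.

(* sup over the ball <= phi at the centre + distortion <= phi at z_i + 2 distortion *)
Lemma MN_le_tMN s eps eta : distortion_le_rate eps eta ->
  \forall N \near \oo, M_N T phi Z (s + (eta + eta)) N eps <= tM_N T phi Z s N eps.
Proof.
case=> N0 _ rate; exists N0 => [//|N N0N].
apply: le_ereal_inf_tmp => _ [I [n [x [z [[nN cover] [z_in ->]]]]]].
apply: ge_ereal_inf; exists (\esum_(i in I) (expR (- ((n i)%:R * (s + (eta + eta))) +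
    sup (phi (n i) @` nball T (n i) (x i) eps)))%:E); first by exists I, n, x.
apply: le_esum => i Ii; rewrite lee_fin ler_expR.
have := sup_nball_le (n i) (x i) eps; have := phi_center_le (z_in i Ii).
have := rate (n i) (leq_trans N0N (nN i Ii)).
by rewrite !mulrDr; lra.
Qed.

(* Shrinking eps enlarges the balls, so an eps-cover is also an eps'-cover. *)
Lemma MN_le_smaller_eps s eps eps' eta : (eps' <= eps)%R ->
  distortion_le_rate eps' eta ->
  \forall N \near \oo, M_N T phi Z (s + eta) N eps' <= M_N T phi Z s N eps.
Proof.
move=> eps'_le; case=> N0 _ rate; exists N0 => [//|N N0N].
apply: le_ereal_inf_tmp => _ [I [n [x [[nN cover] ->]]]].
apply: ge_ereal_inf; exists (\esum_(i in I) (expR (- ((n i)%:R * (s + eta)) +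
    sup (phi (n i) @` nball T (n i) (x i) eps')))%:E).
  exists I, n, x; split => //; split => // y /cover [i Ii yi].
  by exists i => //; exact: le_nball eps'_le _ yi.
apply: le_esum => i Ii; rewrite lee_fin ler_expR.
have := sup_nball_le (n i) (x i) eps'.
have := phi_le_sup_nball (nball_center (n i) (x i) eps).
have := rate (n i) (leq_trans N0N (nN i Ii)).
by rewrite !mulrDr; lra.
Qed.

Lemma Ms_ge0 s eps : 0 <= M_s T phi Z s eps.
Proof.
apply: lime_ge; first exact: ereal_nondecreasing_is_cvgn (MN_nondecreasing _ _).
by apply: nearW => N; exact: MN_ge0.
Qed.

Lemma tMs_ge0 s eps : 0 <= tM_s T phi Z s eps.
Proof.
apply: lime_ge; first exact: ereal_nondecreasing_is_cvgn (tMN_nondecreasing _ _).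
by apply: nearW => N; exact: tMN_ge0.
Qed.

Lemma tMeps_le_Meps eps : tM_eps T phi Z eps <= M_eps T phi Z eps.
Proof.
rewrite -[leRHS]adde0; apply: ereal_inf_zeros_shift => [s|s]; first exact: tMs_ge0.
rewrite addr0; apply: lee_lim_nondecreasing.
- exact: tMN_nondecreasing.
- exact: MN_nondecreasing.
- by apply: nearW => N; exact: tMN_le_MN.
Qed.

Lemma Meps_le_tMeps eps eta : distortion_le_rate eps eta ->
  M_eps T phi Z eps <= tM_eps T phi Z eps + (eta + eta)%:E.
Proof.
move=> rate; apply: ereal_inf_zeros_shift => [s|s]; first exact: Ms_ge0.
apply: lee_lim_nondecreasing; [exact: MN_nondecreasing|exact: tMN_nondecreasing|].
exact: MN_le_tMN.
Qed.

Lemma Meps_le_smaller_eps eps eps' eta : (eps' <= eps)%R ->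
  distortion_le_rate eps' eta ->
  M_eps T phi Z eps' <= M_eps T phi Z eps + eta%:E.
Proof.
move=> eps'_le rate; apply: ereal_inf_zeros_shift => [s|s]; first exact: Ms_ge0.
apply: lee_lim_nondecreasing; [exact: MN_nondecreasing..|].
exact: MN_le_smaller_eps.
Qed.

End neutralized_bowen_sums.

Lemma tempered_distortion_le_rate {R : realType} {X : metricType R} {T : X -> X}
    {phi : nat -> X -> R} : tempered_distortion T phi ->
  forall eta, 0 < eta -> \forall eps \near 0^'+, distortion_le_rate T phi eps eta.
Proof.
move=> tempered eta eta0.
have : \forall eps \near 0^'+,
    (limn_esup (fun n => (distortion T phi n eps / n%:R)%:E) < eta%:E)%E.
  by apply: tempered (open_ereal_lt' _); rewrite lte_fin.
apply: filterS => eps /ereal_inf_lt [_ [V [N _ NV] <-] supV_lt].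
exists N.+1 => // m /= Nm; have m0 : 0 < m%:R :> R by rewrite ltr0n (leq_trans _ Nm).
rewrite mulrC -ler_pdivrMr //; apply/ltW; rewrite -lte_fin.
apply: le_lt_trans supV_lt; apply: ereal_sup_ubound; exists m => //.
by apply: NV; exact: ltnW.
Qed.

Lemma compact_continuous_bounded {R : realType} {X : metricType R} (f : X -> R) :
  compact [set: X] -> continuous f -> exists B : R, forall x, `|f x| <= B.
Proof.
move=> X_compact f_cont.
have [M [_ M_bound]] : bounded_set (f @` [set: X]).
  by apply/compact_bounded/continuous_compact => //; exact: continuous_subspaceT.
by exists (M + 1) => x; apply: M_bound; [rewrite ltrDl | exists x].
Qed.

Theorem mainTheorem2 (R : realType) (X : metricType R) (T : X -> X)
  (phi : nat -> X -> R) (Z : set X) :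
  compact [set: X] ->
  continuous T ->
  (forall n, continuous (phi n)) ->
  Z !=set0 ->
  tempered_distortion T phi ->
  tM_eps T phi Z eps @[eps --> 0^'+] --> P_tildeB T phi Z.
Proof.
move=> X_compact _ phi_cont _ tempered.
have phi_bounded n : exists B : R, forall x, `|phi n x| <= B.
  exact: compact_continuous_bounded.
apply: cvg_at_right0_of_almost_nonincreasing.
- by apply: nearW => eps; exact: tMeps_le_Meps.
- move=> eta eta0; have eta20 : 0 < eta / 2 by rewrite divr_gt0.
  apply: filterS (tempered_distortion_le_rate tempered _ eta20) => eps rate.
  by rewrite [eta in eta%:E]splitr; exact: Meps_le_tMeps rate.
- move=> eta eta0.
  apply: filterS (tempered_distortion_le_rate tempered _ eta0) => t rate e te.
  exact: Meps_le_smaller_eps te rate.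
Qed.
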